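(* Let $\mathcal{C}$ be an Additive-CSP($\psi$) instance with $\mathrm{val}(\mathcal{C})\ge 1-\epsilon$. Then $\mathrm{GI}(G_{\mathcal{C}},G_{\mathcal{C}^0})\ge 1-\epsilon$.
   Context: $H$ is a finite abelian group, $k\ge3$, $\psi\subseteq H^k$ a balanced pairwise independent subgroup (proper subgroup of $H^k$; for $a$ uniform in $\psi$ each coordinate uniform on $H$, any two coordinates independent). An instance $\mathcal{C}=(C_1,\dots,C_m)$ on variables $x_1,\dots,x_n$ over $H$ has constraints $\psi(x_{j_1}+a_1,\dots,x_{j_k}+a_k)=1$ on distinct variables, $a_i\in H$; $\mathcal{C}^0$ sets all $a_i=0$; $\mathrm{val}(\mathcal{C})$ is the maximum fraction of constraints satisfied by an assignment. Variable gadget $\Gamma_x$ for a variable $x$: fix $H=\mathbb{Z}_{p_1}\oplus\dots\oplus\mathbb{Z}_{p_t}$ with $p_i\ge2$; vertices $x\mapsto b$ for $b\in H$. An $i$-row is a set of $p_i$ elements of $H$ agreeing in all coordinates except the $i$-th. Row part (only if $t>1$): for every $i$ and every $i$-row $R$, add a new vertex $w_R$ adjacent to all $x\mapsto b$, $b\in R$, and $i$ new vertices each adjacent only to $w_R$. Cycle part: for every $i$ and $i$-row $R$: if $p_i=2$ add an edge between its two vertices; if $p_i\ge3$, write $R=\{r_0,\dots,r_{p_i-1}\}$ with $r_j$ having $i$-th coordinate $j$, and for each $j\in\mathbb{Z}_{p_i}$ add the edge $\{x\mapsto r_j,x\mapsto r_{j+1}\}$ and two new vertices $u,v$ with edges $\{u,x\mapsto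 r_j\},\{u,x\mapsto r_{j+1}\},\{u,v\},\{v,x\mapsto r_{j+1}\}$. Graph $G_{\mathcal{C}}$: one copy of $\Gamma_{x_j}$ for each variable $x_j$; for each constraint $C_i$ on $(x_{j_1},\dots,x_{j_k})$, a set of constraint vertices, one per assignment $\alpha$ to these variables satisfying $C_i$ (distinct constraints have distinct constraint vertices), forming a clique, with each $\alpha$ adjacent to $x_{j_l}\mapsto\alpha(x_{j_l})$ for $l\in[k]$. $\mathrm{GI}(G,G')=\max_\pi\frac{|\{e\in E(G):\pi(e)\in E(G')\}|}{\max\{|E(G)|,|E(G')|\}}$ over bijections $\pi$. *)

From HB Require Import structures.
From mathcomp Require Import all_boot all_order all_algebra.
Set Implicit Arguments. Unset Strict Implicit. Unset Printing Implicit Defensive.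
Import Order.TTheory GRing.Theory Num.Theory.
Local Open Scope ring_scope.

(* The group H = Z_{p_0} (+) ... (+) Z_{p_{t-1}} (coordinates 0-based),
   with the standing assumption 2 <= p i made explicit in the theorem. *)
Section Group.
Variables (t : nat) (p : 'I_t -> nat).

Definition grp := {dffun forall i : 'I_t, 'Z_(p i)}.

Definition gadd (x y : grp) : grp := finfun (fun i => x i + y i).
Definition gzero : grp := finfun (fun i => 0).
Definition gopp (x : grp) : grp := finfun (fun i => - x i).

Definition incr (i : 'I_t) (x : grp) : grp := finfun (fun l => x l + (l == i)%:R).

Definition is_row (i : 'I_t) (R : {set grp}) : bool :=
  [exists b : grp, R == [set c : grp | [forall l, (l != i) ==> (c l == b l)]]].

(* vertices of a variable gadget (before validity filtering) *)
Definition gbase :=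
  (grp + ('I_t * {set grp}) + ('I_t * {set grp} * 'I_t) + ('I_t * grp * bool))%type.

Definition XV (b : grp) : gbase := inl (inl (inl b)).
Definition WV i R : gbase := inl (inl (inr (i, R))).
Definition LV i R (l : 'I_t) : gbase := inl (inr (i, R, l)).
Definition UV i (b : grp) : gbase := inr (i, b, false).
Definition VV i (b : grp) : gbase := inr (i, b, true).

(* The 0-based direction i has i.+1 leaves (= the paper's 1-based index) *)
Definition gvalid (g : gbase) : bool :=
  match g with
  | inl (inl (inl _)) => true
  | inl (inl (inr (i, R))) => (1 < t)%N && is_row i R
  | inl (inr (i, R, l)) => [&& (1 < t)%N, is_row i R & (l <= i)%N]
  | inr (i, _, _) => (2 < p i)%N
  end.

Definition garc (g g' : gbase) : bool :=
  [|| [exists i, exists R, exists b, [&& g == WV i R, g' == XV b & b \in R]],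
      [exists i, exists R, exists l, (g == LV i R l) && (g' == WV i R)],
      [exists i, exists b, (g == XV b) && (g' == XV (incr i b))]
    | [exists i, exists b, (2 < p i)%N &&
         [|| (g == UV i b) && (g' == XV b),
             (g == UV i b) && (g' == XV (incr i b)),
             (g == UV i b) && (g' == VV i b)
           | (g == VV i b) && (g' == XV (incr i b))]]].

Section Instance.
Variables (k n m : nat).

Record instance := Instance {
  cvar : 'I_m -> 'I_k -> 'I_n;
  cshift : 'I_m -> 'I_k -> grp }.

Definition zero_instance (C : instance) : instance :=
  Instance (cvar C) (fun _ _ => gzero).

Variable psi : {set {ffun 'I_k -> grp}}.

Definition satisfies (C : instance) (x : {ffun 'I_n -> grp}) (i : 'I_m) : bool :=
  [ffun l => gadd (x (cvar C i l)) (cshift C i l)] \in psi.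

Definition val_count (C : instance) : nat :=
  \max_(x : {ffun 'I_n -> grp}) #|[set i : 'I_m | satisfies C x i]|.

Definition valC {R : realFieldType} (C : instance) : R :=
  (val_count C)%:R / m%:R.

(* vertices of G_C: gadget vertices (variable index, gadget vertex)
   and constraint vertices (constraint index, satisfying assignment alpha,
   where alpha l is the value of variable cvar i l) *)
Definition vbase := (('I_n * gbase) + ('I_m * {ffun 'I_k -> grp}))%type.

Definition vvalid (C : instance) (v : vbase) : bool :=
  match v with
  | inl (_, g) => gvalid g
  | inr (i, a) => [ffun l => gadd (a l) (cshift C i l)] \in psi
  end.

Definition vert (C : instance) := {v : vbase | vvalid C v}.

Definition varc (C : instance) (v w : vbase) : bool :=
  match v, w with
  | inl (x, g), inl (y, g') => (x == y) && garc g g'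
  | inr (i, a), inr (j, a') => (i == j) && (a != a')
  | inr (i, a), inl (y, g) => [exists l, (y == cvar C i l) && (g == XV (a l))]
  | _, _ => false
  end.

Definition adjG (C : instance) : rel (vert C) :=
  fun u v => varc C (val u) (val v) || varc C (val v) (val u).

End Instance.
End Group.

Definition edges (V : finType) (r : rel V) : {set {set V}} :=
  [set e : {set V} | [exists u, exists v, [&& u != v, r u v & e == [set u; v]]]].

Definition GI {R : realFieldType} (V V' : finType) (r : rel V) (r' : rel V') : R :=
  (\max_(f : {ffun V -> V'} | injectiveb f && [forall y, y \in codom f])
      #|[set e in edges r | (f @: e) \in edges r']|)%:R
  / (maxn #|edges r| #|edges r'|)%:R.

Arguments adjG {t p k n m} psi C _ _.
Arguments valC {t p k n m} psi {R} C.

From HB Require Import structures.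
From mathcomp Require Import all_boot all_order all_algebra zify.
Import Order.TTheory GRing.Theory Num.Theory.
Set Implicit Arguments. Unset Strict Implicit. Unset Printing Implicit Defensive.

(** Fix an assignment x satisfying the largest number s of constraints and
   relabel G_C by shifting every vertex [y |-> b] of the gadget of y to
   [y |-> b - x y].  Translations are automorphisms of a variable gadget.  A
   constraint vertex alpha of a constraint satisfied by x is sent to
   alpha - x, which satisfies the unshifted constraint because psi is a
   subgroup, so every edge at that constraint is kept; the constraint
   vertices of the other constraints are just sent bijectively to those of
   the unshifted constraint.  Every constraint contributes the same number c
   of edges, in C and in C^0 alike, so with g gadget edges the relabelling
   keeps at least g + s c of the g + m c edges, a fraction at least s / m. *)

Lemma ffun_map_inj (I : finType) (T : Type) (f : I -> T -> T) :
  (forall i, injective (f i)) -> injective (fun a : {ffun I -> T} => [ffun i => f i (a i)]).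
Proof.
by move=> f_inj a b /ffunP ab; apply/ffunP => i; have := ab i; rewrite !ffunE => /f_inj.
Qed.

Section Translation.
Variables (t : nat) (p : 'I_t -> nat).
Local Notation grp := (grp p).
Local Open Scope ring_scope.

Lemma gaddC (x y : grp) : gadd x y = gadd y x.
Proof. by apply/ffunP => i; rewrite !ffunE addrC. Qed.

Lemma gaddA (x y z : grp) : gadd x (gadd y z) = gadd (gadd x y) z.
Proof. by apply/ffunP => i; rewrite !ffunE addrA. Qed.

Lemma gadd0 (x : grp) : gadd x (gzero p) = x.
Proof. by apply/ffunP => i; rewrite !ffunE addr0. Qed.

Lemma gaddN (x : grp) : gadd x (gopp x) = gzero p.
Proof. by apply/ffunP => i; rewrite !ffunE subrr. Qed.

Lemma gaddK (x d : grp) : gadd (gadd x d) (gopp d) = x.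
Proof. by apply/ffunP => i; rewrite !ffunE addrK. Qed.

Lemma gaddNK (x d : grp) : gadd (gadd x (gopp d)) d = x.
Proof. by apply/ffunP => i; rewrite !ffunE subrK. Qed.

Lemma gaddI (d : grp) : injective (fun x => gadd x d).
Proof. by apply: (@can_inj _ _ _ (fun x => gadd x (gopp d))) => x; rewrite gaddK. Qed.

Lemma goppK : involutive (@gopp t p).
Proof. by move=> x; apply/ffunP => i; rewrite !ffunE opprK. Qed.

Lemma goppD (x y : grp) : gopp (gadd x y) = gadd (gopp x) (gopp y).
Proof. by apply/ffunP => i; rewrite !ffunE opprD. Qed.

Lemma incr_gadd i (b d : grp) : incr i (gadd b d) = gadd (incr i b) d.
Proof. by apply/ffunP => l; rewrite !ffunE addrAC. Qed.

Lemma ffun_gadd_inj (I : finType) (d : I -> grp) :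
  injective (fun a : {ffun I -> grp} => [ffun i => gadd (a i) (d i)]).
Proof. by move=> a b /ffunP ab; apply/ffunP => i; have := ab i; rewrite !ffunE => /gaddI. Qed.

Definition translate_set (d : grp) (R : {set grp}) : {set grp} := (fun x => gadd x d) @: R.

Lemma mem_translate_set d R c : (c \in translate_set d R) = (gadd c (gopp d) \in R).
Proof.
apply/imsetP/idP => [[c' Rc' ->]|Rc]; first by rewrite gaddK.
by exists (gadd c (gopp d)); rewrite ?gaddNK.
Qed.

Lemma translate_setK d : cancel (translate_set d) (translate_set (gopp d)).
Proof. by move=> R; apply/setP => c; rewrite !mem_translate_set goppK gaddK. Qed.

Lemma is_row_translate_set i d R : is_row i (translate_set d R) = is_row i R.
Proof.
have row_translate e S : is_row i S -> is_row i (translate_set e S).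
  case/existsP => b /eqP ->; apply/existsP; exists (gadd b e); apply/eqP/setP => c.
  rewrite mem_translate_set !inE; apply: eq_forallb => l.
  by rewrite !ffunE (can2_eq (addrNK (e l)) (addrK (e l))).
apply/idP/idP; last exact: row_translate.
by move=> /(row_translate (gopp d)); rewrite translate_setK.
Qed.

Definition gadget_translate (d : grp) (g : gbase p) : gbase p :=
  match g with
  | inl (inl (inl b)) => XV (gadd b d)
  | inl (inl (inr (i, R))) => WV i (translate_set d R)
  | inl (inr (i, R, l)) => LV i (translate_set d R) l
  | inr (i, b, c) => inr (i, gadd b d, c)
  end.

Lemma gadget_translateK d : cancel (gadget_translate d) (gadget_translate (gopp d)).
Proof.
by case=> [[[b|[i R]]|[[i R] l]]|[[i b] c]] /=; rewrite ?gaddK ?translate_setK.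
Qed.

Lemma gadget_translate_inj d : injective (gadget_translate d).
Proof. exact: can_inj (gadget_translateK d). Qed.

Lemma gvalid_translate d g : gvalid (gadget_translate d g) = gvalid g.
Proof. by case: g => [[[b|[i R]]|[[i R] l]]|[[i b] c]] //=; rewrite is_row_translate_set. Qed.

Lemma garc_translate d g g' : garc g g' -> garc (gadget_translate d g) (gadget_translate d g').
Proof.
case/or4P.
- case/existsP => i /existsP [R /existsP [b /and3P [/eqP-> /eqP-> Rb]]].
  apply/or4P; constructor 1; apply/existsP; exists i.
  apply/existsP; exists (translate_set d R); apply/existsP; exists (gadd b d).
  by rewrite !eqxx mem_translate_set gaddK Rb.
- case/existsP => i /existsP [R /existsP [l /andP [/eqP-> /eqP->]]].
  apply/or4P; constructor 2; apply/existsP; exists i.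
  by apply/existsP; exists (translate_set d R); apply/existsP; exists l; rewrite !eqxx.
- case/existsP => i /existsP [b /andP [/eqP-> /eqP->]].
  apply/or4P; constructor 3; apply/existsP; exists i; apply/existsP; exists (gadd b d).
  by rewrite /= incr_gadd !eqxx.
- case/existsP => i /existsP [b /andP [p_gt2 /or4P arc]].
  apply/or4P; constructor 4; apply/existsP; exists i; apply/existsP; exists (gadd b d).
  rewrite p_gt2; apply/or4P.
  by case: arc => /andP [/eqP-> /eqP->] /=; rewrite ?incr_gadd;
    [constructor 1 | constructor 2 | constructor 3 | constructor 4]; rewrite !eqxx.
Qed.

End Translation.

Lemma set2_eq_cases (T : finType) (a b u v : T) : u != v -> [set a; b] = [set u; v] ->
  (a = u /\ b = v) \/ (a = v /\ b = u).
Proof.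
move=> uv E.
have : a \in [set u; v] by rewrite -E set21.
case/set2P => Ea; subst a.
- have /set2P[vu | ->] : v \in [set u; b] by rewrite E set22.
    by rewrite vu eqxx in uv.
  by left.
- have /set2P[uv' | ->] : u \in [set v; b] by rewrite E set21.
    by rewrite uv' eqxx in uv.
  by right.
Qed.

Section Edges.
Variables (V : finType) (r : rel V).
Hypothesis r_sym : symmetric r.

Lemma mem_edges_set2 a b : ([set a; b] \in edges r) = (a != b) && r a b.
Proof.
rewrite inE; apply/existsP/andP => [[u /existsP [v /and3P [uv ruv /eqP E]]]|[ab rab]].
  by case: (set2_eq_cases uv E) => [[-> ->]|[-> ->]]; rewrite // eq_sym r_sym.
by exists a; apply/existsP; exists b; rewrite ab rab eqxx.
Qed.

Lemma card_edges_pairs (Q : pred {set V}) :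
  (#|[set e in edges r | Q e]| * 2 =
   #|[set uv : V * V | [&& uv.1 != uv.2, r uv.1 uv.2 & Q [set uv.1; uv.2]]]|)%N.
Proof.
set EQ := [set e in edges r | Q e]; set PS := [set uv : V * V | _].
rewrite -[in RHS]sum1_card (partition_big (fun uv => [set uv.1; uv.2]) (mem EQ)) /=;
  last by case=> u v; rewrite inE /= => /and3P [uv ruv Qe]; rewrite inE mem_edges_set2 uv ruv.
rewrite -sum_nat_const; apply: eq_bigr => e.
rewrite inE => /andP [Ee Qe]; move: Ee; rewrite inE.
case/existsP => u /existsP [v /and3P [uv ruv /eqP E]].
rewrite sum1dep_card (_ : 2 = #|[set (u, v); (v, u)]|); last first.
  by rewrite cards2 xpair_eqE (negbTE uv).
subst e; apply: eq_card => [[a b]]; rewrite !inE /=.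
have set2C : [set v; u] = [set u; v] by rewrite setUC.
apply/idP/idP.
- case/orP => /eqP [-> ->]; first by rewrite uv ruv Qe eqxx.
  by rewrite set2C eq_sym uv r_sym ruv Qe eqxx.
- case/andP => _ /eqP /(set2_eq_cases uv) [[-> ->]|[-> ->]]; by rewrite eqxx ?orbT.
Qed.

End Edges.

Lemma card_sig_pairs (T : finType) (P : pred T) (Q : pred (T * T)) :
  #|[set uv : {x | P x} * {x | P x} | Q (val uv.1, val uv.2)]| =
  #|[set uv : T * T | [&& P uv.1, P uv.2 & Q uv]]|.
Proof.
rewrite -(card_imset _ (f := fun uv : {x | P x} * {x | P x} => (val uv.1, val uv.2))); last first.
  by move=> [a b] [c d] /= [/val_inj -> /val_inj ->].
apply: eq_card => [[a b]]; rewrite inE; apply/imsetP/idP.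
  by case=> [[x y]]; rewrite inE /= => Qxy [-> ->]; rewrite (valP x) (valP y).
by case/and3P => Pa Pb Qab; exists (exist _ a Pa, exist _ b Pb); rewrite ?inE.
Qed.

Lemma sig_map_bij (T : finType) (P P' : pred T) (F : T -> T) :
  injective F -> (forall v, P' (F v) = P v) ->
  {f : {x | P x} -> {x | P' x} | bijective f & forall u, val (f u) = F (val u)}.
Proof.
move=> F_inj FP.
have Pf (u : {x | P x}) : P' (F (val u)) by rewrite FP (valP u).
have Pg (w : {x | P' x}) : P (finv F (val w)) by rewrite -FP f_finv // (valP w).
exists (fun u => exist (fun x => P' x) _ (Pf u)) => //.
by exists (fun w => exist (fun x => P x) _ (Pg w)) => [u|w]; apply: val_inj => /=;
  [exact: finv_f | exact: f_finv].
Qed.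

Lemma GI_ge_preserved (R : realFieldType) (V V' : finType) (r : rel V) (r' : rel V')
  (f : V -> V') : bijective f ->
  (#|[set e in edges r | f @: e \in edges r']|%:R / (maxn #|edges r| #|edges r'|)%:R
    <= GI r r' :> R)%R.
Proof.
move=> f_bij; rewrite /GI ler_wpM2r ?invr_ge0 // ler_nat.
have -> : [set e in edges r | f @: e \in edges r'] =
          [set e in edges r | finfun f @: e \in edges r'].
  by apply/setP => e; rewrite !inE (eq_imset _ (ffunE f)).
apply: (leq_bigmax_cond (finfun f)); apply/andP; split.
  by apply/injectiveP; apply: eq_inj (bij_inj f_bij) (fun x => esym (ffunE f x)).
by apply/forallP => y; case: f_bij => g _ fgK; rewrite -[y]fgK -(ffunE f); exact: codom_f.
Qed.

Lemma ratio_le (R : realFieldType) (E N g m c s : nat) :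
  (0 < m)%N -> (0 < c)%N -> (s <= m)%N ->
  (E * 2 = g + m * c)%N -> (g + s * c <= N * 2)%N ->
  (s%:R / m%:R <= N%:R / E%:R :> R)%R.
Proof.
move=> m_gt0 c_gt0 sm E2 N2.
have E_gt0 : (0 < E)%N by nia.
rewrite ler_pdivrMr ?ltr0n // mulrAC ler_pdivlMr ?ltr0n // -!natrM ler_nat.
have : (s * g <= m * g)%N by rewrite leq_mul2r sm orbT.
nia.
Qed.

Section Instance.
Variables (t : nat) (p : 'I_t -> nat) (k n m : nat) (psi : {set {ffun 'I_k -> grp p}}).
Local Notation V := (vbase p k n m).
Local Notation instance := (instance p k n m).
Local Notation vec := {ffun 'I_k -> grp p}.

Definition adjacent (C : instance) (u v : V) : bool := varc C u v || varc C v u.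

Definition arc_pairs (C : instance) : {set V * V} := [set uv : V * V |
  [&& vvalid psi C uv.1, vvalid psi C uv.2, uv.1 != uv.2 & adjacent C uv.1 uv.2]].

Definition pair_constraint (uv : V * V) : option 'I_m :=
  match uv.1, uv.2 with
  | inr (i, _), _ => Some i
  | _, inr (i, _) => Some i
  | _, _ => None
  end.

Definition gadget_pairs (C : instance) : {set V * V} :=
  [set uv in arc_pairs C | pair_constraint uv == None].

Definition star (C : instance) (i : 'I_m) : {set V * V} :=
  [set uv in arc_pairs C | pair_constraint uv == Some i].

Lemma card_by_constraint (S : {set V * V}) :
  #|S| = (#|[set uv in S | pair_constraint uv == None]|
          + \sum_i #|[set uv in S | pair_constraint uv == Some i]|)%N.
Proof.
rewrite -sum1_card (partition_big pair_constraint predT) // (bigD1 None) //=.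
rewrite sum1dep_card; congr (_ + _)%N.
rewrite (reindex_omap Some id) /=; last by case.
by apply: eq_big => [i|i _]; rewrite ?eqxx // sum1dep_card.
Qed.

Lemma card_arc_pairs (C : instance) c : (forall i, #|star C i| = c) ->
  #|arc_pairs C| = (#|gadget_pairs C| + m * c)%N.
Proof.
move=> starC; rewrite card_by_constraint (eq_bigr _ (fun i _ => starC i)).
by rewrite big_const_ord iter_addn_0 mulnC.
Qed.

Lemma card_pairs_ge (C : instance) (T : {set V * V}) (A : {set 'I_m}) :
  gadget_pairs C \subset T -> (forall i, i \in A -> star C i \subset T) ->
  (#|gadget_pairs C| + \sum_(i in A) #|star C i| <= #|T|)%N.
Proof.
have filter_sub (o : option 'I_m) : [set uv in arc_pairs C | pair_constraint uv == o] \subset T ->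
    [set uv in arc_pairs C | pair_constraint uv == o] \subset [set uv in T | pair_constraint uv == o].
  by move=> sT; apply/subsetP => uv uvC; rewrite inE (subsetP sT _ uvC); case/setIdP: uvC.
move=> gT sT; rewrite [#|T|]card_by_constraint leq_add ?subset_leq_card ?filter_sub //.
apply: (@leq_trans (\sum_(i in A) #|[set uv in T | pair_constraint uv == Some i]|)).
  by apply: leq_sum => i iA; rewrite subset_leq_card ?filter_sub ?sT.
by rewrite [X in (_ <= X)%N](bigID (mem A)) leq_addr.
Qed.

Lemma card_preserved_arc_pairs (C C' : instance) (f : vert psi C -> vert psi C') (F : V -> V) :
  injective f -> (forall u, val (f u) = F (val u)) ->
  (#|[set e in edges (adjG psi C) | f @: e \in edges (adjG psi C')]| * 2 =
   #|[set uv in arc_pairs C | (F uv.1, F uv.2) \in arc_pairs C']|)%N.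
Proof.
move=> f_inj fF.
have adjG_sym (D : instance) : symmetric (adjG psi D) by move=> u v; rewrite /adjG orbC.
rewrite (card_edges_pairs (adjG_sym C)).
pose Q (uv : V * V) := [&& uv.1 != uv.2, adjacent C uv.1 uv.2 & (F uv.1, F uv.2) \in arc_pairs C'].
transitivity #|[set uv : vert psi C * vert psi C | Q (val uv.1, val uv.2)]|.
  apply: eq_card => [[a b]]; rewrite [in LHS]inE [in RHS]inE /= imsetU !imset_set1.
  rewrite (mem_edges_set2 (adjG_sym C')) /Q /= inE.
  have fF' u : F (sval u) = sval (f u) by rewrite -fF.
  have val_eq (a' b' : vert psi C) : (sval a' == sval b') = (a' == b') := val_eqE a' b'.
  have fval_eq : (sval (f a) == sval (f b)) = (a == b) by rewrite -(inj_eq f_inj); exact: val_eqE.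
  rewrite !fF' (valP (f a)) (valP (f b)) val_eq fval_eq (inj_eq f_inj).
  by case: (a == b).
rewrite (card_sig_pairs (vvalid psi C) Q).
by apply: eq_card => [[a b]]; rewrite /Q !inE /= !andbA.
Qed.

Lemma card_edges_adjG (C : instance) : (#|edges (adjG psi C)| * 2 = #|arc_pairs C|)%N.
Proof.
have := @card_preserved_arc_pairs C C (fun u => u) (fun v => v) (fun _ _ => id) (fun=> erefl).
rewrite (eq_card (B := edges (adjG psi C))); last by move=> e; rewrite inE imset_id andbb.
by rewrite (eq_card (B := arc_pairs C)) // => -[a b]; rewrite inE andbb.
Qed.

Lemma star_pair_cases (C : instance) i (u v : V) : (u, v) \in star C i ->
  [\/ exists a a' : vec, [/\ u = inr (i, a), v = inr (i, a'), a != a',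
                            vvalid psi C u & vvalid psi C v],
      exists (a : vec) l, [/\ u = inr (i, a), v = inl (cvar C i l, XV (a l)) & vvalid psi C u]
    | exists (a : vec) l, [/\ u = inl (cvar C i l, XV (a l)), v = inr (i, a) & vvalid psi C v]].
Proof.
rewrite !inE /= => /andP [/and4P [vu vv uv adj] /eqP].
case: u vu uv adj => [[y g]|[i1 a]]; case: v vv => [[y' g']|[i2 a']] //= vv vu uv adj [Ei].
- subst i2; apply: Or33; case/existsP: adj => l /andP [/eqP-> /eqP->].
  by exists a', l.
- subst i1; apply: Or32; case/orP: adj => [/existsP [l /andP [/eqP-> /eqP->]]|//].
  by exists a, l.
- subst i1; apply: Or31; exists a, a'.
  case/orP: adj => /andP [/eqP Ei aa']; subst i2; split => //.
  by rewrite eq_sym.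
Qed.

Section StarMap.
Variables (C C' : instance) (i j : 'I_m) (H : V -> V) (ps : 'I_k -> grp p -> grp p).
Hypothesis ps_inj : forall l, injective (ps l).
Hypothesis H_constraint : forall a, H (inr (i, a)) = inr (j, [ffun l => ps l (a l)]).
Hypothesis H_variable :
  forall l b, H (inl (cvar C i l, XV b)) = inl (cvar C' j l, XV (ps l b)).
Hypothesis H_valid :
  forall a, vvalid psi C (inr (i, a)) -> vvalid psi C' (inr (j, [ffun l => ps l (a l)])).

Lemma star_map uv : uv \in star C i -> (H uv.1, H uv.2) \in star C' j.
Proof.
have inr_eq (x y : 'I_m * vec) : (inr x == inr y :> V) = (x == y) by apply/eqP/eqP => [[]|->].
case: uv => u v /star_pair_cases[[a [a' [-> -> aa' va va']]]|[a [l [-> -> va]]]|[a [l [-> -> va]]]];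
  rewrite !inE /= ?H_constraint ?H_variable ?H_valid //= /adjacent /= !eqxx ?orbF andbT.
- by rewrite inr_eq xpair_eqE eqxx (inj_eq (ffun_map_inj ps_inj)) aa'.
- by apply/existsP; exists l; rewrite ffunE !eqxx.
- by apply/existsP; exists l; rewrite ffunE !eqxx.
Qed.

Definition star_vertex (w : V) : Prop :=
  (exists a, w = inr (i, a)) \/ (exists l b, w = inl (cvar C i l, XV b)).

Lemma star_vertices uv : uv \in star C i -> star_vertex uv.1 /\ star_vertex uv.2.
Proof.
case: uv => u v /star_pair_cases[[a [a' [-> -> _ _ _]]]|[a [l [-> -> _]]]|[a [l [-> -> _]]]].
- by split; left; [exists a | exists a'].
- by split; [left; exists a | right; exists l, (a l)].
- by split; [right; exists l, (a l) | left; exists a].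
Qed.

Hypothesis cvar_inj : injective (cvar C' j).

Lemma star_vertex_inj w w' : star_vertex w -> star_vertex w' -> H w = H w' -> w = w'.
Proof.
case=> [[a ->]|[l [b ->]]]; case=> [[a' ->]|[l' [b' ->]]];
  rewrite ?H_constraint ?H_variable // => -[].
- by move=> /(ffun_map_inj ps_inj) ->.
- by move=> /cvar_inj ll'; subst l' => /ps_inj ->.
Qed.

Lemma card_star_map : (#|star C i| <= #|star C' j|)%N.
Proof.
have H_inj : {in star C i &, injective (fun uv : V * V => (H uv.1, H uv.2))}.
  move=> [u v] [u' v'] /star_vertices[su sv] /star_vertices[su' sv'] /= [Hu Hv].
  by move: (star_vertex_inj su su' Hu) (star_vertex_inj sv sv' Hv) => /= -> ->.
rewrite -(card_in_imset H_inj); apply: subset_leq_card.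
by apply/subsetP => _ /imsetP [uv uvC ->]; exact: star_map.
Qed.

End StarMap.

Lemma card_star_le (C C' : instance) i j :
  injective (cvar C i) -> injective (cvar C' j) -> (#|star C i| <= #|star C' j|)%N.
Proof.
move=> inj_i inj_j.
(* Constraint vertices move by the difference of the shifts, and the gadget of
   the l-th variable of constraint i is translated onto that of constraint j. *)
pose d l := gadd (cshift C i l) (gopp (cshift C' j l)).
pose H (v : V) : V := match v with
  | inr (_, a) => inr (j, [ffun l => gadd (a l) (d l)])
  | inl (y, g) => if [pick l | cvar C i l == y] is Some l
                  then inl (cvar C' j l, gadget_translate (d l) g) else v
  end.
apply: (@card_star_map C C' i j H (fun l b => gadd b (d l))) => //.
- by move=> l; apply: gaddI.
- by move=> l b /=; case: pickP => [l' /eqP /inj_i -> // | /(_ l)]; rewrite eqxx.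
- move=> a /=; congr (_ \in psi); apply/ffunP => l.
  by rewrite !ffunE /d -gaddA gaddNK.
Qed.

Lemma card_star_eq (C C' : instance) i j :
  injective (cvar C i) -> injective (cvar C' j) -> #|star C i| = #|star C' j|.
Proof. by move=> inj_i inj_j; apply/anti_leq; rewrite !card_star_le. Qed.

Lemma card_star_gt0 (C : instance) i : [ffun _ => gzero p] \in psi -> (0 < k)%N ->
  (0 < #|star C i|)%N.
Proof.
move=> psi0 k_gt0; rewrite card_gt0; apply/set0Pn.
pose a : vec := [ffun l => gopp (cshift C i l)].
pose l0 : 'I_k := Ordinal k_gt0.
exists (inr (i, a), inl (cvar C i l0, XV (a l0))).
rewrite !inE /= eqxx andbT /adjacent /= orbF; apply/andP; split.
  by congr (_ \in psi): psi0; apply/ffunP => l; rewrite !ffunE gaddC gaddN.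
by apply/existsP; exists l0; rewrite !eqxx.
Qed.

Lemma gadget_pairs_eq (C C' : instance) : gadget_pairs C = gadget_pairs C'.
Proof.
apply/setP => [[u v]]; rewrite !inE /adjacent /=.
by case: u => [[y g]|[i a]]; case: v => [[y' g']|[i' a']]; rewrite /= ?andbF.
Qed.

Lemma val_count_attained (C : instance) :
  {x | val_count psi C = #|[set i | satisfies psi C x i]|}.
Proof. by apply: bigop.eq_bigmax; apply/card_gt0P; exists [ffun => gzero p]. Qed.

Section Alignment.
Hypothesis psiD : forall a b, a \in psi -> b \in psi -> [ffun l => gadd (a l) (b l)] \in psi.
Hypothesis psiN : forall a, a \in psi -> [ffun l => gopp (a l)] \in psi.
Variables (C : instance) (x : {ffun 'I_n -> grp p}).
Local Notation C0 := (zero_instance C).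

Definition align (v : V) : V :=
  match v with
  | inl (y, g) => inl (y, gadget_translate (gopp (x y)) g)
  | inr (i, a) => inr (i, if satisfies psi C x i
                          then [ffun l => gadd (a l) (gopp (x (cvar C i l)))]
                          else [ffun l => gadd (a l) (cshift C i l)])
  end.

Lemma align_inj : injective align.
Proof.
case=> [[y g]|[i a]]; case=> [[y' g']|[i' a']] //= [<-].
  by move=> /gadget_translate_inj ->.
by case: (satisfies psi C x i) => /ffun_gadd_inj ->.
Qed.

(* If x satisfies constraint i, then a + shift lies in psi iff a - x does,
   psi being a subgroup containing x + shift. *)
Lemma vvalid_align v : vvalid psi C0 (align v) = vvalid psi C v.
Proof.
case: v => [[y g]|[i a]] /=; first exact: gvalid_translate.
rewrite /satisfies; set w := [ffun l => gadd (x (cvar C i l)) (cshift C i l)].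
case: ifP => psi_w; last by congr (_ \in psi); apply/ffunP => l; rewrite !ffunE gadd0.
apply/idP/idP => psi_a.
  have := psiD psi_a psi_w; congr (_ \in psi); apply/ffunP => l.
  by rewrite !ffunE gadd0 gaddA gaddNK.
have := psiD psi_a (psiN psi_w); congr (_ \in psi); apply/ffunP => l.
rewrite !ffunE gadd0 goppD -gaddA [gadd (cshift C i l) _]gaddA.
by rewrite (gaddC (cshift C i l)) -gaddA gaddN gadd0.
Qed.

Lemma align_gadget_pair uv : uv \in gadget_pairs C -> (align uv.1, align uv.2) \in arc_pairs C0.
Proof.
case: uv => u v; rewrite inE => /andP [uvC /eqP].
case: u v uvC => [[y g]|[i a]] [[y' g']|[i' a']] // + _.
rewrite !inE !vvalid_align (inj_eq align_inj) /adjacent /= => /and4P [-> -> -> /orP adj].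
by case: adj => /andP [/eqP E arc]; subst y'; rewrite eqxx (garc_translate _ arc) ?orbT.
Qed.

Lemma align_star_pair i uv : satisfies psi C x i -> uv \in star C i ->
  (align uv.1, align uv.2) \in arc_pairs C0.
Proof.
move=> sat_i uvC.
pose ps l b := gadd b (gopp (x (cvar C i l))).
have align_constraint a : align (inr (i, a)) = inr (i, [ffun l => ps l (a l)]).
  by rewrite /= sat_i.
have align_valid a : vvalid psi C (inr (i, a)) -> vvalid psi C0 (inr (i, [ffun l => ps l (a l)])).
  by rewrite -align_constraint vvalid_align.
have := @star_map C C0 i i align ps (fun l => @gaddI _ _ _) align_constraint (fun _ _ => erefl) align_valid _ uvC.
by case/setIdP.
Qed.

Definition aligned_pairs : {set V * V} :=
  [set uv in arc_pairs C | (align uv.1, align uv.2) \in arc_pairs C0].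

Lemma card_aligned_pairs :
  (#|gadget_pairs C| + \sum_(i in [set i | satisfies psi C x i]) #|star C i|
     <= #|aligned_pairs|)%N.
Proof.
apply: card_pairs_ge.
  by apply/subsetP => uv uvC; rewrite inE align_gadget_pair ?andbT //; case/setIdP: uvC.
move=> i; rewrite inE => sat_i; apply/subsetP => uv uvC.
by rewrite inE (align_star_pair sat_i uvC) andbT; case/setIdP: uvC.
Qed.

End Alignment.

End Instance.

Local Open Scope ring_scope.

Theorem lemma7p3 (R : realFieldType)
  (t : nat) (p : 'I_t -> nat) (hp : forall i, (2 <= p i)%N)
  (k : nat) (hk : (3 <= k)%N)
  (psi : {set {ffun 'I_k -> grp p}})
  (psi0 : [ffun _ => gzero p] \in psi)
  (psiD : forall a b, a \in psi -> b \in psi -> [ffun l => gadd (a l) (b l)] \in psi)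
  (psiN : forall a, a \in psi -> [ffun l => gopp (a l)] \in psi)
  (psi_proper : psi != [set: {ffun 'I_k -> grp p}])
  (psi_bal : forall (l : 'I_k) (b : grp p),
      (#|[set a in psi | a l == b]| * #|grp p| = #|psi|)%N)
  (psi_pw : forall (l1 l2 : 'I_k), l1 != l2 -> forall (b c : grp p),
      (#|[set a in psi | (a l1 == b) && (a l2 == c)]| * #|grp p| ^ 2 = #|psi|)%N)
  (n m : nat) (C : instance p k n m)
  (hdist : forall i, injective (cvar C i))
  (eps : R)
  (hval : 1 - eps <= valC psi C) :
  1 - eps <= GI (adjG psi C) (adjG psi (zero_instance C)).
Proof.
apply: le_trans hval _; rewrite /valC.
have [m0 | m_gt0] := posnP m; first by rewrite [in m%:R]m0 invr0 mulr0 divr_ge0.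
set C0 := zero_instance C.
have [x ->] := val_count_attained psi C.
have [f f_bij f_val] :=
  sig_map_bij (align_inj (psi := psi) (C := C) (x := x)) (vvalid_align psiD psiN C x).
pose c := #|star psi C (Ordinal m_gt0)|.
have star_c (D : instance p k n m) : cvar D = cvar C -> forall i, #|star psi D i| = c.
  by move=> DC i; apply: card_star_eq; rewrite ?DC.
have E_C := card_edges_adjG psi C; rewrite (card_arc_pairs (star_c C erefl)) in E_C.
have E_C0 : #|edges (adjG psi C0)| = #|edges (adjG psi C)|.
  apply/eqP; rewrite -(eqn_pmul2r (isT : 0 < 2)%N) card_edges_adjG E_C.
  by rewrite (card_arc_pairs (star_c C0 erefl)) (gadget_pairs_eq _ C0 C).
have N_ge := card_aligned_pairs psiD psiN C x.
rewrite (eq_bigr _ (fun i _ => star_c C erefl i)) sum_nat_const /aligned_pairs in N_ge.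
rewrite -(card_preserved_arc_pairs (bij_inj f_bij) f_val) in N_ge.
apply: le_trans _ (GI_ge_preserved R _ _ f_bij); rewrite E_C0 maxnn.
apply: ratio_le E_C N_ge => //; first exact: card_star_gt0 psi0 (leq_trans _ hk).
by rewrite -[X in (_ <= X)%N]card_ord max_card.
Qed.
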